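(* Let $G$ be a finite simple undirected graph and let $F$ be a rooted forest on vertex set $V(G)$, given by parent pointers, all of whose edges are edges of $G$. Let $u$ be the root of one tree of $F$. Run the following procedure. Initialize a set $S=\{u\}$ and a FIFO queue $Q$ containing only $u$. While $Q$ is nonempty: pop a vertex $x$ from $Q$, and for each neighbor $y$ of $x$ in $G$: if $y=\mathrm{parent}(x)$, skip $y$; else if $\mathrm{parent}(y)=x$, push $y$ onto $Q$ and add $y$ to $S$; otherwise set $\mathit{succ}=\mathrm{true}$ and scan the vertices $w=y,\ \mathrm{parent}(y),\ \mathrm{parent}(\mathrm{parent}(y)),\dots$ up to and including the root of the tree of $F$ containing $y$, where for each scanned $w$: if $w\in S$, set $\mathit{succ}=\mathrm{false}$ and stop the scan, else add $w$ to $S$; if after the scan $\mathit{succ}=\mathrm{true}$, the whole procedure stops and reports success (the edge $(x,y)$ being a replacement edge). If the queue becomes empty without success being reported, the procedure terminates reporting failure. Then, if the procedure terminates reporting failure, $S$ is exactly the set of vertices of the tree of $F$ rooted at $u$.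
   Context: In the paper this procedure is the search for a replacement edge after a tree edge has been deleted from a spanning forest maintained by parent pointers; $u$ is the root of the subtree in which the search is performed. *)

From mathcomp Require Import all_boot.
Set Implicit Arguments. Unset Strict Implicit. Unset Printing Implicit Defensive.

(* Graph: vertex type T : finType, adjacency e : rel T.
   Forest: parent pointers  parent : T -> option T  (None = root).
   The order in which neighbours are visited is an arbitrary adjacency list
   nbrs : T -> seq T (uniq, with the same elements as the neighbourhood). *)

Section Procedure.
Variables (T : finType) (parent : T -> option T) (nbrs : T -> seq T).

Definition anc (k : nat) (v : T) : option T := iter k (obind parent) (Some v).

(* The scan w = y, parent y, ... up to the root.  Returns (succ, new S).
   Fuel #|T| suffices: each scanned vertex is added to S or stops the scan. *)
Fixpoint scan (fuel : nat) (S : {set T}) (w : T) : bool * {set T} :=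
  match fuel with
  | 0 => (true, S)
  | f.+1 =>
      if w \in S then (false, S)
      else let S' := w |: S in
           match parent w with
           | None => (true, S')
           | Some p => scan f S' p
           end
  end.

(* Processing the neighbours ys of the popped vertex x.
   None = success reported; Some (S, Q) = continue with state (S, Q). *)
Fixpoint process (x : T) (ys : seq T) (S : {set T}) (Q : seq T)
  : option ({set T} * seq T) :=
  match ys with
  | [::] => Some (S, Q)
  | y :: ys' =>
      if parent x == Some y then process x ys' S Q
      else if parent y == Some x then process x ys' (y |: S) (rcons Q y)
      else let (succ, S') := scan #|T| S y in
           if succ then None else process x ys' S' Q
  end.

Inductive outcome := Success | Failure of {set T}.

(* Main loop with fuel; None = not terminated within the given fuel. *)
Fixpoint run (fuel : nat) (S : {set T}) (Q : seq T) : option outcome :=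
  match fuel with
  | 0 => None
  | f.+1 =>
      match Q with
      | [::] => Some (Failure S)
      | x :: Q' =>
          match process x (nbrs x) S Q' with
          | None => Some Success
          | Some (S', Q'') => run f S' Q''
          end
      end
  end.

Definition search (u : T) (fuel : nat) : option outcome := run fuel [set u] [:: u].

End Procedure.

From mathcomp Require Import all_boot.

Set Implicit Arguments.
Unset Strict Implicit.
Unset Printing Implicit Defensive.

(* The main loop keeps three invariants: every vertex of S lies in the tree
   below u, the queue is contained in S, and every vertex of that tree is in S
   or below a queued vertex.  Popping x enqueues all children of x (acyclicity
   rules out that the parent of x is one of them), and a failed scan only adds
   the vertices of a tree path leading up to a vertex already in S, hence stays
   in the tree.  When the queue is empty the third invariant says that S
   contains the whole tree. *)

Section Forest.
Variables (T : finType) (parent : T -> option T).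

Lemma anc_parent k w : anc parent k.+1 w = obind (anc parent k) (parent w).
Proof.
elim: k => [|k IH]; first by rewrite /anc /=; case: (parent w).
by rewrite /anc iterS -/(anc parent k.+1 w) IH; case: (parent w).
Qed.

Lemma anc_add j k v x :
  anc parent j v = Some x -> anc parent (k + j) v = anc parent k x.
Proof. by rewrite /anc iterD => ->. Qed.

Lemma anc_None m n w :
  anc parent m w = None -> m <= n -> anc parent n w = None.
Proof.
move=> wm /subnK <-; rewrite /anc iterD -/(anc parent m w) wm.
by elim: (n - m) => //= i ->.
Qed.

Definition descendant (z v : T) : Prop := exists k, anc parent k v = Some z.

Lemma descendant_refl v : descendant v v.
Proof. by exists 0. Qed.

Lemma descendant_trans z x v :
  descendant z x -> descendant x v -> descendant z v.
Proof. by move=> [k xk] [j vj]; exists (k + j); rewrite (anc_add _ vj). Qed.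

Lemma descendant_parent z v p :
  parent v = Some p -> descendant z p -> descendant z v.
Proof. by move=> vp /descendant_trans; apply; exists 1; rewrite /anc /= vp. Qed.

Lemma descendant_child_or_self x v :
  descendant x v -> v = x \/ exists2 c, parent c = Some x & descendant c v.
Proof.
case=> [[[<-]|k]]; first by left.
rewrite /anc iterS -/(anc parent k v).
by case vk: (anc parent k v) => [c|] //= cx; right; exists c => //; exists k.
Qed.

Hypothesis forest : forall v, exists k, anc parent k v = None.

Lemma anc_acyclic k w : anc parent k.+1 w <> Some w.
Proof.
move=> wk; have periodic n : anc parent (n * k.+1) w = Some w.
  by elim: n => // n IH; rewrite mulSn (anc_add _ IH).
have [m wm] := forest w.
by have := periodic m; rewrite (anc_None wm) // leq_pmulr.
Qed.

Lemma scan_subset f (S : {set T}) w : S \subset (scan parent f S w).2.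
Proof.
elim: f S w => [|f IH] S w //=; case: ifP => // _.
case: (parent w) => [p|] /=; last exact: subsetUr.
exact: subset_trans (subsetUr _ _) (IH _ _).
Qed.

Lemma scan_fail f S w S' :
  scan parent f S w = (false, S') ->
  exists2 z, z \in S &
    descendant z w /\ forall v, v \in S' -> v \in S \/ descendant z v.
Proof.
elim: f S w => [|f IH] S w //=; case: ifP => wS.
  by case=> <-; exists w => //; split=> [|v]; [exact: descendant_refl | left].
case wp: (parent w) => [p|] // /IH [z].
rewrite in_setU1 => /orP [/eqP -> {z} [[k pk] _] | zS [pz S'z]].
  by case: (anc_acyclic (k := k) (w := w)); rewrite anc_parent wp.
exists z => //; split; first exact: descendant_parent wp pz.
move=> v /S'z [|]; last by right.
rewrite in_setU1 => /orP [/eqP -> | vS]; last by left.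
by right; exact: descendant_parent wp pz.
Qed.

Section Process.
Variable x : T.

Lemma process_grow ys S Q S' Q' :
  process parent x ys S Q = Some (S', Q') ->
  [/\ S \subset S', {subset Q <= Q'} & {subset Q' <= [predU Q & S']}].
Proof.
elim: ys S Q => [|y ys IH] S Q /=.
  by case=> <- <-; split=> // q qQ; rewrite inE qQ.
case: ifP => _; first exact: IH.
case: ifP => _.
  move=> /IH [sub QQ Q'Q]; split.
  - exact: subset_trans (subsetUr _ _) sub.
  - by move=> q qQ; apply: QQ; rewrite mem_rcons in_cons qQ orbT.
  - move=> q /Q'Q; rewrite !inE mem_rcons in_cons.
    case/orP=> [/orP [/eqP -> | -> //] | qS']; last by rewrite qS' orbT.
    by rewrite (subsetP sub) ?orbT // in_setU1 eqxx.
case yS: (scan parent #|T| S y) => [[] S1] // /IH [sub QQ Q'Q]; split=> //.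
by apply: subset_trans sub; have := scan_subset #|T| S y; rewrite yS.
Qed.

Lemma process_children ys S Q S' Q' :
  process parent x ys S Q = Some (S', Q') ->
  {in ys, forall c, parent c = Some x -> c \in Q'}.
Proof.
elim: ys S Q => [|y ys IH] S Q //=; case: ifP => [/eqP xy | _].
  move=> /IH ysQ' c; rewrite in_cons => /orP [/eqP -> yx | /ysQ' //].
  by case: (anc_acyclic (k := 1) (w := x)); rewrite /anc /= xy /= yx.
case: ifP => [_ | yx].
  move=> proc c; rewrite in_cons => /orP [/eqP -> _ | /(IH _ _ proc) //].
  by have [_ QQ _] := process_grow proc; apply: QQ; rewrite mem_rcons mem_head.
case: (scan parent #|T| S y) => [[] S1] // /IH ysQ' c.
by rewrite in_cons => /orP [/eqP -> cx | /ysQ' //]; rewrite cx eqxx in yx.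
Qed.

Lemma process_in_subtree u ys (S : {set T}) Q S' Q' :
  descendant u x -> {in S, forall v, descendant u v} ->
  process parent x ys S Q = Some (S', Q') -> {in S', forall v, descendant u v}.
Proof.
move=> ux; elim: ys S Q => [|y ys IH] S Q Su /=; first by case=> <- _.
case: ifP => _; first exact: IH.
case: ifP => [/eqP yx | _].
  apply: IH => v; rewrite in_setU1 => /orP [/eqP -> | /Su //].
  exact: descendant_parent yx ux.
case yS: (scan parent #|T| S y) => [[] S1] //; apply: IH => v.
have [z zS [_ S1z]] := scan_fail yS.
by move=> /S1z [/Su // | zv]; exact: descendant_trans (Su z zS) zv.
Qed.

End Process.

Section Search.
Variables (nbrs : T -> seq T) (u : T).
Hypothesis children_in_nbrs : forall x c, parent c = Some x -> c \in nbrs x.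

Definition search_inv (S : {set T}) (Q : seq T) : Prop :=
  [/\ {in S, forall v, descendant u v}, {subset Q <= S} &
      forall v, descendant u v -> v \in S \/ exists2 a, a \in Q & descendant a v].

Lemma search_inv_init : search_inv [set u] [:: u].
Proof.
split=> [v | q | v uv]; first by move/set1P->; exact: descendant_refl.
  by rewrite inE => /eqP ->; rewrite set11.
by right; exists u; rewrite ?mem_head.
Qed.

Lemma search_inv_process x Q S S' Q' :
  search_inv S (x :: Q) -> process parent x (nbrs x) S Q = Some (S', Q') ->
  search_inv S' Q'.
Proof.
case=> Su QS cover proc; have xS : x \in S := QS x (mem_head _ _).
have [sub QQ Q'Q] := process_grow proc.
split.
- exact: process_in_subtree (Su x xS) Su proc.
- move=> q /Q'Q /orP [qQ | //]; apply/(subsetP sub)/QS.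
  by rewrite in_cons qQ orbT.
- move=> v /cover [vS | [a]]; first by left; exact: (subsetP sub).
  rewrite in_cons => /orP [/eqP -> {a} | aQ av]; last by right; exists a => //; exact: QQ.
  case/descendant_child_or_self => [-> | [c cx cv]]; first by left; exact: (subsetP sub).
  by right; exists c => //; exact: process_children proc c (children_in_nbrs cx) cx.
Qed.

Lemma run_failure fuel S Q Sf :
  search_inv S Q -> run parent nbrs fuel S Q = Some (Failure Sf) ->
  forall v, v \in Sf <-> descendant u v.
Proof.
elim: fuel S Q => [|f IH] S Q inv //=.
case: Q inv => [|x Q] inv.
  case=> <- v; case: inv => Su _ cover.
  by split; [exact: Su | case/cover => // [[a]]].
case proc: (process parent x (nbrs x) S Q) => [[S' Q']|] //.
exact/IH/(search_inv_process inv proc).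
Qed.

End Search.
End Forest.

Theorem lemma7 (T : finType) (e : rel T) (parent : T -> option T)
    (nbrs : T -> seq T) (u : T)
    (e_sym : symmetric e) (e_irr : irreflexive e)
    (nbrs_uniq : forall x, uniq (nbrs x))
    (nbrs_mem : forall x y, (y \in nbrs x) = e x y)
    (parent_edge : forall v p, parent v = Some p -> e v p)
    (forest : forall v, exists k, anc parent k v = None)
    (u_root : parent u = None) :
  forall (fuel : nat) (S : {set T}),
    search parent nbrs u fuel = Some (Failure S) ->
    forall v, v \in S <-> exists k, anc parent k v = Some u.
Proof.
have children_in_nbrs x c : parent c = Some x -> c \in nbrs x.
  by move=> cx; rewrite nbrs_mem e_sym; exact: parent_edge.
move=> fuel S; exact: (run_failure forest children_in_nbrs (search_inv_init parent u)).
Qed.
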